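(* Let $S$ be a quaternionic structure with abstract 2-Brauer group $B(S)$ and fundamental ideal $I=I(S)$ of its Witt ring. Then $B(S)\cong I^2/I^3$ as groups, via the isomorphism $I^2/I^3\to B(S)$ sending $\langle\langle a,b\rangle\rangle+I^3$ to $q(a,b)$.
   Context: A quaternionic structure is a triple $S=(G,-1,q)$ where $G$ is a multiplicative group in which every element is its own inverse, $-1\in G$ is distinguished (possibly $-1=1$), $-a:=(-1)a$, and $q:G\times G\to Q$ is surjective onto a set $Q$ with distinguished $0$, satisfying for all $a,b,c,d\in G$: (Q1) $q(a,-a)=0$; (Q2) $q(a,b)=q(b,a)$; (Q3) $q(a,b)=q(a,c)\iff q(a,bc)=0$; (Q4) $q(a,b)=q(c,d)\iff\exists x\in G$: $q(a,b)=q(a,x)=q(c,x)=q(c,d)$. The abstract 2-Brauer group $B(S)$ is the abelian group (operation $\ast$) generated by $Q$ subject only to $q(a,b)\ast q(a,c)=q(a,bc)$ for all $a,b,c\in G$. Forms: tuples $\langle a_1,\dots,a_n\rangle\in G^n$ with $\perp$ (concatenation) and $\otimes$ ($\varphi\otimes\langle b_1,\dots,b_m\rangle=b_1\varphi\perp\dots\perp b_m\varphi$, $c\varphi=\langle ca_1,\dots\rangle$). Isometry: $\langle a\rangle\cong\langle b\rangle$ iff $a=b$; $\langle a,b\rangle\cong\langle c,d\rangle$ iff $ab=cd$ and $q(a,b)=q(c,d)$; for $n>2$, $\langle a_1,\dots,a_n\rangle\cong\langle b_1,\dots,b_n\rangle$ iff there are $a,b\in G$ and $\chi$ of dimension $n-2$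 with $\langle a_1,a\rangle\cong\langle b_1,b\rangle$, $\langle a_2,\dots,a_n\rangle\cong\langle a\rangle\perp\chi$, $\langle b_2,\dots,b_n\rangle\cong\langle b\rangle\perp\chi$. $\mathbb H=\langle1,-1\rangle$. Witt equivalence: $\varphi\perp k\times\mathbb H\cong\psi\perp l\times\mathbb H$ for some $k,l$; the Witt ring $W(S)$ is the ring of Witt classes under $\perp,\otimes$. The fundamental ideal $I(S)$ is the ideal of classes of even-dimensional forms and $I^k$ its $k$-th power. $\langle\langle a,b\rangle\rangle=\langle1,-a\rangle\otimes\langle1,-b\rangle$. *)

From mathcomp Require Import ssreflect ssrfun ssrbool eqtype ssrnat seq.
Set Implicit Arguments. Unset Strict Implicit. Unset Printing Implicit Defensive.

Record qstruct := QStruct {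
  G : Type;
  mulG : G -> G -> G;
  oneG : G;
  mulgA : forall x y z, mulG x (mulG y z) = mulG (mulG x y) z;
  mul1g : forall x, mulG oneG x = x;
  mulg1 : forall x, mulG x oneG = x;
  mulgg : forall x, mulG x x = oneG;
  m1 : G;
  Q : Type;
  zeroQ : Q;
  q : G -> G -> Q;
  q_surj : forall x : Q, exists a b, q a b = x;
  Q1 : forall a, q a (mulG m1 a) = zeroQ;
  Q2 : forall a b, q a b = q b a;
  Q3 : forall a b c, q a b = q a c <-> q a (mulG b c) = zeroQ;
  Q4 : forall a b c d, q a b = q c d <->
         exists x, q a b = q a x /\ q a x = q c x /\ q c x = q c d
}.

Section Forms.
Variable T : qstruct.
Local Notation G := (G T).
Local Notation mul := (@mulG T).
Local Notation one := (@oneG T).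
Local Notation q := (@q T).

(* forms are finite tuples of elements of G; perp is concatenation (++) *)
Definition form := seq G.

Definition scale (c : G) (phi : form) : form := map (mul c) phi.

Definition tensor (phi psi : form) : form := flatten [seq scale b phi | b <- psi].

Definition iso2 (a1 a2 b1 b2 : G) : Prop :=
  mul a1 a2 = mul b1 b2 /\ q a1 a2 = q b1 b2.

Fixpoint isom (n : nat) (phi psi : form) : Prop :=
  match n with
  | 0 => phi = [::] /\ psi = [::]
  | S n' =>
    match n' with
    | 0 => exists a b, phi = [:: a] /\ psi = [:: b] /\ a = b
    | 1 => exists a1 a2 b1 b2,
             phi = [:: a1; a2] /\ psi = [:: b1; b2] /\ iso2 a1 a2 b1 b2
    | _ => exists a1 phi' b1 psi' (a b : G) (chi : form),
             phi = a1 :: phi' /\ psi = b1 :: psi' /\ size chi = n.-2 /\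
             iso2 a1 a b1 b /\ isom n' phi' (a :: chi) /\ isom n' psi' (b :: chi)
    end
  end.

Definition iso (phi psi : form) : Prop := isom (size phi) phi psi.

Definition hyp : form := [:: one; m1 T].
Definition hyps (k : nat) : form := flatten (nseq k hyp).

Definition witt (phi psi : form) : Prop :=
  exists k l, iso (phi ++ hyps k) (psi ++ hyps l).

Definition pfister (a b : G) : form :=
  tensor [:: one; mul (@m1 T) a] [:: one; mul (@m1 T) b].

Definition prodf (chis : seq form) : form := foldl tensor [:: one] chis.

(* I^k : the k-th power of the fundamental ideal I (classes of even-dim.   *)
(* forms), i.e. the additive subgroup of W(T) generated by the products of *)
(* k elements of I; as a (Witt-class-closed) predicate on forms.           *)
Inductive Ipow (k : nat) : form -> Prop :=
| Ipow_prod (chis : seq form) (phi : form) :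
    size chis = k -> all (fun chi => ~~ odd (size chi)) chis ->
    witt phi (prodf chis) -> Ipow k phi
| Ipow_zero (phi : form) : witt phi [::] -> Ipow k phi
| Ipow_add (phi psi chi : form) :
    Ipow k phi -> Ipow k psi -> witt chi (phi ++ psi) -> Ipow k chi
| Ipow_opp (phi chi : form) :
    Ipow k phi -> witt (chi ++ phi) [::] -> Ipow k chi.

Definition cosetI3_eq (phi psi : form) : Prop :=
  exists chi, Ipow 3 chi /\ witt phi (psi ++ chi).

End Forms.

(* The abstract 2-Brauer group B(S): the abelian group presented by     *)
(* generators Q and relations q(a,b) * q(a,c) = q(a,bc).  Elements are  *)
(* words in the generators and their inverses ((true,x) = x,            *)
(* (false,x) = x^-1), product = concatenation, modulo the congruence    *)
(* generated by the group, commutativity and defining relations.        *)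
Definition Bword (S : qstruct) := seq (bool * Q S).

Inductive Beq (S : qstruct) : Bword S -> Bword S -> Prop :=
| Beq_refl u : Beq u u
| Beq_sym u v : Beq u v -> Beq v u
| Beq_trans u v w : Beq u v -> Beq v w -> Beq u w
| Beq_cat u u' v v' : Beq u u' -> Beq v v' -> Beq (u ++ v) (u' ++ v')
| Beq_invr x : Beq [:: (true, x); (false, x)] [::]
| Beq_invl x : Beq [:: (false, x); (true, x)] [::]
| Beq_comm g h : Beq [:: g; h] [:: h; g]
| Beq_rel a b c :
    Beq [:: (true, @q S a b); (true, @q S a c)] [:: (true, @q S a (@mulG S b c))].

(* The isomorphism I^2/I^3 -> B(S) is the Clifford invariant.  For a form
   <a_1, ..., a_n> let disc = a_1 ... a_n and hasse = sum_(i<j) q(a_i, a_j)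
   in B(S); both are invariants of the recursive isometry.  On forms of even
   dimension with trivial signed discriminant, hasse corrected by q(-1,-1)
   in dimensions 4, 6 mod 8 is additive and vanishes on hyperbolic planes, so
   it is a Witt invariant; it vanishes on the generators of I^3 and sends
   <<a,b>> to q(a,b).  Conversely, w |-> sum of <<a_i,b_i>> respects the
   relations of B(S) modulo I^3 (by Q3, Q4 and <<a,b>> + <<a,c>> = <<a,bc>>
   mod I^3), and lowering the dimension two at a time shows that every form
   with trivial signed discriminant is congruent to such a sum mod I^3.
   Every isometry needed is produced by one criterion: forms matched, up to
   reordering, entry by entry and by isometric binary blocks are isometric. *)

From Pilot Require Import Defs.
From mathcomp Require Import ssreflect ssrfun ssrbool eqtype ssrnat seq div.
From Stdlib Require Import Permutation Setoid Morphisms ClassicalEpsilon.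
Set Implicit Arguments. Unset Strict Implicit. Unset Printing Implicit Defensive.

Section GroupNormalization.
Variable S : qstruct.
Local Notation G := (G S).
Local Infix "⋅" := (@mulG S) (at level 40, left associativity).
Local Notation one := (@oneG S).

Lemma mulgC (x y : G) : x ⋅ y = y ⋅ x.
Proof.
transitivity (x ⋅ y ⋅ ((y ⋅ x) ⋅ (y ⋅ x))); first by rewrite mulgg mulg1.
by rewrite !mulgA -(mulgA x y y) mulgg mulg1 mulgg mul1g.
Qed.

(* Reflexive normalisation in the elementary abelian 2-group G: a product of
   atoms is represented by the bit vector of the atoms occurring an odd number
   of times. *)
Inductive gterm := GVar of nat | GOne | GMul of gterm & gterm.

Fixpoint gterm_eval (env : seq G) t : G :=
  match t with
  | GVar n => nth one env n
  | GOne => one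
  | GMul t1 t2 => gterm_eval env t1 ⋅ gterm_eval env t2
  end.

Fixpoint xorv (s t : seq bool) : seq bool :=
  match s, t with
  | [::], _ => t
  | _, [::] => s
  | a :: s', b :: t' => (a (+) b) :: xorv s' t'
  end.

Fixpoint gterm_nf t : seq bool :=
  match t with
  | GVar n => rcons (nseq n false) true
  | GOne => [::]
  | GMul t1 t2 => xorv (gterm_nf t1) (gterm_nf t2)
  end.

Fixpoint nf_eval (env : seq G) (s : seq bool) : G :=
  match s with
  | [::] => one
  | b :: s' => (if b then head one env else one) ⋅ nf_eval (behead env) s'
  end.

Fixpoint nf_eq (s t : seq bool) : bool :=
  match s, t with
  | [::], _ => all negb t
  | _, [::] => all negb s
  | a :: s', b :: t' => (a == b) && nf_eq s' t'
  end.

Lemma nf_eval_xorv env s t : nf_eval env (xorv s t) = nf_eval env s ⋅ nf_eval env t.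
Proof.
elim: s t env => [|a s IH] [|b t] env /=; rewrite ?mul1g ?mulg1 // IH.
set h := head one env; set A := nf_eval _ s; set B := nf_eval _ t.
case: a; case: b => /=; rewrite ?mul1g ?mulg1.
- by rewrite (mulgC h A) -mulgA (mulgA h h B) mulgg mul1g.
- by rewrite !mulgA.
- by rewrite mulgA (mulgC h A) -mulgA.
- by [].
Qed.

Lemma nf_eval_zero env s : all negb s -> nf_eval env s = one.
Proof. elim: s env => [|[] s IH] env //= /IH ->; exact: mulg1. Qed.

Lemma nf_eval_eq env s t : nf_eq s t -> nf_eval env s = nf_eval env t.
Proof.
elim: s t env => [|a s IH] [|b t] env //=.
- by case/andP; case: b => //= _ /nf_eval_zero ->; rewrite !mulg1.
- by case/andP; case: a => //= _ /nf_eval_zero ->; rewrite !mulg1.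
- by case/andP=> /eqP -> /IH ->.
Qed.

Lemma nf_eval_var env n : nf_eval env (rcons (nseq n false) true) = nth one env n.
Proof.
elim: n env => [|n IH] [|x env] //=; rewrite ?mulg1 ?mul1g ?IH //.
by rewrite nth_nil; case: n {IH} => [|n] /=; rewrite ?mulg1 ?mul1g // -(nth_nil one n).
Qed.

Lemma gterm_evalE env t : gterm_eval env t = nf_eval env (gterm_nf t).
Proof.
elim: t => [n||t1 IH1 t2 IH2] /=; by rewrite ?nf_eval_var ?nf_eval_xorv ?IH1 ?IH2.
Qed.

Lemma gterm_eval_nf env t1 t2 :
  nf_eq (gterm_nf t1) (gterm_nf t2) -> gterm_eval env t1 = gterm_eval env t2.
Proof. by rewrite !gterm_evalE => /nf_eval_eq ->. Qed.

End GroupNormalization.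

Ltac gfind x env :=
  match env with
  | [::] => constr:(@None nat)
  | x :: _ => constr:(Some 0)
  | _ :: ?e =>
    let r := gfind x e in
    match r with Some ?n => constr:(Some n.+1) | None => constr:(@None nat) end
  end.
Ltac gpush env x :=
  match env with
  | [::] => constr:([:: x])
  | ?y :: ?e => let e' := gpush e x in constr:(y :: e')
  end.
Ltac gquote e env :=
  match e with
  | @mulG _ ?a ?b =>
    let r1 := gquote a env in
    match r1 with (?ta, ?env1) =>
    let r2 := gquote b env1 in
    match r2 with (?tb, ?env2) => constr:((GMul ta tb, env2)) end end
  | @oneG _ => constr:((GOne, env))
  | _ =>
    let r := gfind e env in
    match r with
    | Some ?n => constr:((GVar n, env))
    | None => let n := eval compute in (size env) in
              let env' := gpush env e in constr:((GVar n, env'))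
    end
  end.
Ltac gnorm :=
  match goal with |- @eq ?T ?l ?r =>
    let rl := gquote l (@nil T) in
    match rl with (?tl, ?env1) =>
    let rr := gquote r env1 in
    match rr with (?tr, ?env) =>
      change (gterm_eval env tl = gterm_eval env tr);
      apply: gterm_eval_nf; vm_compute; reflexivity
    end end
  end.

Ltac gnorm_seq :=
  lazymatch goal with
  | |- (_ :: _) = (_ :: _) => refine (f_equal2 cons _ _); [gnorm | gnorm_seq]
  | |- [::] = [::] => reflexivity
  end.

(* Stdlib states these with [app]; restating them with [cat] lets the
   syntactic matching of [psolve] see through the intermediate goals. *)
Section PermutationCat.
Variable T : Type.
Implicit Types (a : T) (A X l r : seq T).

Lemma Permutation_cons_cat a X r : Permutation (a :: X ++ r) (X ++ a :: r).
Proof. exact: Permutation_middle. Qed.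

Lemma Permutation_cat_cons X a r : Permutation (X ++ a :: r) (a :: X ++ r).
Proof. exact/Permutation_sym/Permutation_middle. Qed.

Lemma Permutation_cons_rcons a X : Permutation (a :: X) (X ++ [:: a]).
Proof. exact: Permutation_cons_append. Qed.

Lemma Permutation_catl A l r : Permutation l r -> Permutation (A ++ l) (A ++ r).
Proof. exact: Permutation_app_head. Qed.

Lemma Permutation_catr A l r : Permutation l r -> Permutation (l ++ A) (r ++ A).
Proof. exact: Permutation_app_tail. Qed.

Lemma Permutation_catCA A X r : Permutation (A ++ X ++ r) (X ++ A ++ r).
Proof. exact: Permutation_app_swap_app. Qed.

Lemma Permutation_catC A X : Permutation (A ++ X) (X ++ A).
Proof. exact: Permutation_app_comm. Qed.

Lemma Permutation_cats0 A : Permutation (A ++ [::]) A.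
Proof. by rewrite cats0. Qed.

Lemma Permutation_size l r : Permutation l r -> size l = size r.
Proof. exact: Permutation_length. Qed.

#[export] Instance cat_Permutation :
  Proper (@Permutation T ==> @Permutation T ==> @Permutation T) cat.
Proof. by move=> l l' Pl r r' Pr; apply: Permutation_app. Qed.

Lemma Permutation_cons_cons_inv (x y : T) L R :
  Permutation (x :: L) (y :: R) ->
  (x = y /\ Permutation L R) \/ exists M, Permutation L (y :: M) /\ Permutation R (x :: M).
Proof.
move=> P; case: (Permutation_in y (Permutation_sym P) (List.in_eq _ _)) => [Exy|].
  by subst y; left; split=> //; exact: Permutation_cons_inv P.
move=> Hy; have [L1 [L2 EL]] := List.in_split _ _ Hy; right; exists (L1 ++ L2).
have PL : Permutation L (y :: L1 ++ L2) by rewrite EL; exact: Permutation_cat_cons.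
split=> //; apply: (@Permutation_cons_inv _ _ _ y).
by apply: perm_trans (Permutation_sym P) _; apply: perm_trans (perm_skip x PL) (perm_swap _ _ _).
Qed.
End PermutationCat.
Arguments Permutation_catl {T} A {l r}.
Arguments Permutation_catr {T} A {l r}.

Ltac rm_el a R :=
  match R with
  | a :: ?t => t
  | ?b :: ?t => let t' := rm_el a t in constr:(b :: t')
  | ?X ++ ?t => let t' := rm_el a t in constr:(X ++ t')
  end.
Ltac rm_bl A R :=
  match R with
  | A ++ ?t => t
  | A => let T0 := type of A in let T1 := eval hnf in T0 in
         lazymatch T1 with seq ?T => constr:(@nil T) | list ?T => constr:(@nil T) end
  | ?b :: ?t => let t' := rm_bl A t in constr:(b :: t')
  | ?X ++ ?t => let t' := rm_bl A t in constr:(X ++ t')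
  end.
Ltac move_el :=
  match goal with
  | |- Permutation (?a :: ?t) (?a :: ?t) => apply: Permutation_refl
  | |- Permutation (?a :: ?b :: ?t) (?b :: ?r) =>
    eapply perm_trans; [apply: perm_swap | apply: perm_skip; move_el]
  | |- Permutation (?a :: ?X ++ ?t) (?X ++ ?r) =>
    eapply perm_trans; [apply: Permutation_cons_cat | apply: Permutation_catl; move_el]
  | |- Permutation (?a :: ?X) (?X ++ ?r) =>
    eapply perm_trans; [apply: Permutation_cons_rcons | apply: Permutation_catl; move_el]
  end.
Ltac move_bl :=
  match goal with
  | |- Permutation (?A ++ ?t) (?A ++ ?t) => apply: Permutation_refl
  | |- Permutation (?A ++ [::]) ?A => apply: Permutation_cats0
  | |- Permutation (?A ++ ?b :: ?t) (?b :: ?r) =>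
    eapply perm_trans; [apply: Permutation_cat_cons | apply: perm_skip; move_bl]
  | |- Permutation (?A ++ ?X ++ ?t) (?X ++ ?r) =>
    eapply perm_trans; [apply: Permutation_catCA | apply: Permutation_catl; move_bl]
  | |- Permutation (?A ++ ?X) (?X ++ ?r) =>
    eapply perm_trans; [apply: Permutation_catC | apply: Permutation_catl; move_bl]
  | |- Permutation ?A ?A => apply: Permutation_refl
  end.
Ltac psolve_rec :=
  lazymatch goal with
  | |- Permutation ?l ?l => apply: Permutation_refl
  | |- Permutation (?a :: ?l) ?R =>
    let R' := rm_el a R in
    apply: (@perm_trans _ _ (a :: R')); [apply: perm_skip; psolve_rec | move_el]
  | |- Permutation (?A ++ ?l) ?R =>
    let R' := rm_bl A R in
    apply: (@perm_trans _ _ (A ++ R')); [apply: Permutation_catl; psolve_rec | move_bl]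
  | |- Permutation ?A ?R =>
    apply: (@perm_trans _ _ (A ++ [::])); [apply/Permutation_sym/Permutation_cats0 | psolve_rec]
  end.
Ltac cat_norm :=
  repeat match goal with
  | |- context [(?x ++ ?y) ++ ?z] => rewrite -[(x ++ y) ++ z]catA
  | |- context [?x ++ [::]] => rewrite [x ++ [::]]cats0
  | |- context [[::] ++ ?x] => rewrite [[::] ++ x]cat0s
  end.
(* Proves [Permutation L R] when [R] rearranges the atoms and opaque blocks of [L]. *)
Ltac psolve := cbn [cat fst snd]; cat_norm; cbn [cat fst snd]; psolve_rec.

Section Quaternionic.
Variable S : qstruct.
Local Notation G := (G S).
Local Infix "⋅" := (@mulG S) (at level 40, left associativity).
Local Notation one := (@oneG S).
Local Notation m1 := (@m1 S).
Local Notation q := (@q S).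
Local Notation Q := (Q S).
Local Notation zeroQ := (@zeroQ S).
Local Notation form := (Defs.form S).
Local Notation iso2 := (@iso2 S).
Local Notation isom := (@isom S).
Local Notation iso := (@iso S).
Local Notation witt := (@witt S).
Local Notation hyps := (@hyps S).
Local Notation Ipow := (@Ipow S).
Local Notation scale := (@scale S).
Local Notation tensor := (@tensor S).
Local Notation prodf := (@prodf S).
Local Notation pfister := (@pfister S).
Local Notation Bw := (Bword S).
Local Notation "u ≡ v" := (@Beq S u v) (at level 70).

(** * Isometries from matched blocks *)

Lemma iso2_sym a b c d : iso2 a b c d -> iso2 c d a b.
Proof. by case. Qed.

Lemma iso2_swl a b c d : iso2 a b c d -> iso2 b a c d.
Proof. by case=> e1 e2; split; [rewrite -e1 mulgC | rewrite -e2 Q2]. Qed.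

Lemma iso2_swr a b c d : iso2 a b c d -> iso2 a b d c.
Proof. by move/iso2_sym/iso2_swl/iso2_sym. Qed.

Lemma iso2_swap a b : iso2 a b b a.
Proof. exact: iso2_swl. Qed.

Inductive block_iso : form -> form -> Prop :=
| block_iso_nil : block_iso [::] [::]
| block_iso_cons x L R : block_iso L R -> block_iso (x :: L) (x :: R)
| block_iso_pair x y z w L R :
    iso2 x y z w -> block_iso L R -> block_iso [:: x, y & L] [:: z, w & R]
| block_iso_perm L L' R R' :
    Permutation L L' -> Permutation R R' -> block_iso L R -> block_iso L' R'.

Lemma block_iso_refl L : block_iso L L.
Proof. by elim: L => [|x L IH]; constructor. Qed.

Lemma block_iso_sym L R : block_iso L R -> block_iso R L.
Proof.
elim=> {L R} [||x y z w L R /iso2_sym|L L' R R' PL PR _ IH]; try by constructor.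
exact: block_iso_perm PR PL IH.
Qed.

#[local] Instance block_iso_Permutation :
  Proper (@Permutation G ==> @Permutation G ==> iff) block_iso.
Proof.
move=> L L' PL R R' PR; split; first exact: block_iso_perm.
exact: block_iso_perm (Permutation_sym PL) (Permutation_sym PR).
Qed.

Lemma block_iso_cat L R L' R' : block_iso L R -> block_iso L' R' -> block_iso (L ++ L') (R ++ R').
Proof.
move=> H H'; elim: H => {L R} [||x y z w L R Hi|L L1 R R1 PL PR _ IH] //=; try by constructor.
exact: (block_iso_perm (Permutation_catr L' PL) (Permutation_catr R' PR) IH).
Qed.

Lemma block_iso_size L R : block_iso L R -> size L = size R.
Proof.
elim=> {L R} //= [x L R _ ->|x y z w L R _ _ ->|L L' R R' PL PR _ E] //.
by rewrite -(Permutation_size PL) -(Permutation_size PR).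
Qed.

Lemma block_iso_consl_inv x L R : block_iso (x :: L) R ->
  (exists R', Permutation R (x :: R') /\ block_iso L R') \/
  (exists u z w L' R', iso2 x u z w /\ Permutation L (u :: L') /\
     Permutation R [:: z, w & R'] /\ block_iso L' R').
Proof.
move: {-2}(x :: L) (Permutation_refl (x :: L)) => L0 P0 H.
elim: H x L P0 => {L0 R} [|y L0 R H0 IH|a b c d L0 R Hi H0 IH|L0 L1 R R1 PL PR _ IH] x L P0.
- by have := Permutation_nil P0.
- case: (Permutation_cons_cons_inv P0) => [[Eyx P]|[M [PM PL]]].
    by subst y; left; exists R; split=> //; exact: block_iso_perm P (Permutation_refl _) H0.
  case: (IH _ _ PM) => [[R' [PR H]]|[u [z [w [L' [R' [Hu [PL' [PR H]]]]]]]]].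
    left; exists (y :: R'); split; first exact: perm_trans (perm_skip y PR) (perm_swap _ _ _).
    exact: block_iso_perm (Permutation_sym PL) (Permutation_refl _) (block_iso_cons y H).
  right; exists u, z, w, (y :: L'), (y :: R'); split=> //; split.
    by apply: perm_trans PL _; apply: perm_trans (perm_skip y PL') (perm_swap _ _ _).
  split; last exact: block_iso_cons.
  by apply: perm_trans (perm_skip y PR) _; psolve.
- case: (Permutation_cons_cons_inv P0) => [[Eax P]|[M [PM PL]]].
    subst a; right; exists b, c, d, L0, R; split=> //; split; first exact: Permutation_sym.
    by split=> //; exact: Permutation_refl.
  case: (Permutation_cons_cons_inv PM) => [[Ebx P]|[M2 [PM2 PM']]].
    subst b; right; exists a, c, d, L0, R; split; first exact: iso2_swl.
    split; last by split=> //; exact: Permutation_refl.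
    by rewrite PL P.
  case: (IH _ _ PM2) => [[R' [PR H]]|[u [z [w [L' [R' [Hu [PL' [PR H]]]]]]]]].
    left; exists [:: c, d & R']; split; first by rewrite PR; psolve.
    by rewrite PL PM'; exact: block_iso_pair.
  right; exists u, z, w, [:: a, b & L'], [:: c, d & R']; split=> //; split.
    by rewrite PL PM' PL'; psolve.
  by split; [rewrite PR; psolve | exact: block_iso_pair].
- case: (IH _ _ (perm_trans PL P0)) => [[R' [PR' H]]|[u [z [w [L' [R' [Hu [PL' [PR' H]]]]]]]]].
    by left; exists R'; rewrite -PR.
  by right; exists u, z, w, L', R'; rewrite -PR.
Qed.

Lemma block_iso_single x y : block_iso [:: x] [:: y] -> x = y.
Proof.
case/block_iso_consl_inv => [[R' [P _]]|[u [z [w [L' [R' [_ [P _]]]]]]]].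
  by case: (Permutation_length_1_inv P).
by case: (Permutation_nil_cons P).
Qed.

Lemma block_iso_split x y L R : block_iso (x :: L) (y :: R) -> L <> [::] ->
  exists a b chi, iso2 x a y b /\ block_iso L (a :: chi) /\ block_iso R (b :: chi).
Proof.
case/block_iso_consl_inv => [[R' [P H]]|[u [z [w [L' [R' [Hu [PL [P H]]]]]]]]] L0.
  case: (Permutation_cons_cons_inv P) => [[Eyx PR]|[M [PR PR']]].
    subst y; case: L L0 H => [//|a chi] _ H; exists a, a, chi; split=> //.
    by split; [exact: block_iso_refl | rewrite PR; exact: block_iso_sym].
  exists y, x, M; split; first exact: iso2_swap.
  by split; [rewrite -PR' | rewrite PR; exact: block_iso_refl].
case: (Permutation_cons_cons_inv P) => [[Eyz PR]|[M [PR PM]]].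
  subst z; exists u, w, L'; split=> //; split; first by rewrite PL; exact: block_iso_refl.
  by rewrite PR; apply/block_iso_cons/block_iso_sym.
case: (Permutation_cons_cons_inv PM) => [[Ewy PR']|[M2 [PR' PM2]]].
  subst w; exists u, z, L'; split; first exact: iso2_swr.
  split; first by rewrite PL; exact: block_iso_refl.
  by rewrite PR -PR'; apply/block_iso_cons/block_iso_sym.
exists y, x, (u :: M2); split; first exact: iso2_swap.
split.
  rewrite PR' in H; rewrite PL.
  exact: block_iso_perm (Permutation_refl _) (perm_swap _ _ _) (block_iso_cons u H).
rewrite PR PM2; apply: (block_iso_pair _ (block_iso_refl M2)); exact: iso2_sym.
Qed.

Lemma isom_of_block_iso n L R : size L = n -> block_iso L R -> isom n L R.
Proof.
elim/ltn_ind: n L R => n IH L R sL H; have sR := block_iso_size H; rewrite sL in sR.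
case: n IH sL sR => [|[|n]] IH sL sR /=.
- by split; apply/size0nil.
- move: H; case: L sL => [|x []] // _; case: R sR => [|y []] // _ /block_iso_single ->.
  by exists y, y.
move: H; case: L sL => [|x L] // [sL]; case: R sR => [|y R] // [sR] H.
have L0 : L <> [::] by move=> EL; rewrite EL in sL.
have [a [b [chi [Hab [HL HR]]]]] := block_iso_split H L0.
have schi : size chi = n by have := block_iso_size HL; rewrite sL => -[].
case: n IH sL sR schi => [|m] IH sL sR schi.
  move: HL HR {H L0}; case: L sL => [|x2 []] // _; case: R sR => [|y2 []] // _.
  case: chi schi => // _ HR HL.
  by exists x, x2, y, y2; rewrite (block_iso_single HL) (block_iso_single HR).
exists x, L, y, R, a, b, chi; do 4! split=> //.
by split; [apply: (IH m.+2) HL | apply: (IH m.+2) HR].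
Qed.

Lemma iso_of_block_iso L R : block_iso L R -> iso L R.
Proof. exact: isom_of_block_iso. Qed.

(** * Witt equivalence and congruence modulo I^3 *)

Lemma qx1 a : q a one = zeroQ.
Proof. by have /(Q3 a one one).1 := erefl (q a one); rewrite mulg1. Qed.

Lemma q1x a : q one a = zeroQ.
Proof. by rewrite Q2 qx1. Qed.

Lemma iso2_hyp x : iso2 x (m1 ⋅ x) one m1.
Proof. by split; [gnorm | rewrite Q1 q1x]. Qed.

Definition neg (X : form) : form := scale m1 X.

Lemma neg_cat X Y : neg (X ++ Y) = neg X ++ neg Y.
Proof. exact: map_cat. Qed.

Lemma negK X : neg (neg X) = X.
Proof. by elim: X => //= x X; rewrite /neg /= => ->; congr (_ :: _); gnorm. Qed.

Lemma block_iso_neg_hyps C : block_iso (neg C ++ C) (hyps (size C)).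
Proof.
elim: C => [|c C IH]; first exact: block_iso_nil.
rewrite -[hyps _]/([:: one; m1] ++ hyps (size C)).
have -> : neg (c :: C) ++ c :: C = m1 ⋅ c :: neg C ++ c :: C by [].
rewrite (_ : Permutation (m1 ⋅ c :: neg C ++ c :: C) [:: m1 ⋅ c, c & neg C ++ C]);
  last by psolve.
exact/block_iso_pair/IH/iso2_swl/iso2_hyp.
Qed.

Lemma witt_of_block_iso X Y k l : block_iso (X ++ hyps k) (Y ++ hyps l) -> witt X Y.
Proof. by move=> H; exists k, l; exact: iso_of_block_iso. Qed.

Lemma witt_perm X Y : Permutation X Y -> witt X Y.
Proof.
by move=> P; apply: (witt_of_block_iso (k := 0) (l := 0)); rewrite !cats0 P; exact: block_iso_refl.
Qed.

Lemma witt_refl X : witt X X.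
Proof. exact/witt_perm/Permutation_refl. Qed.

Lemma witt_cancel_negl X Y C : Permutation X (Y ++ neg C ++ C) -> witt X Y.
Proof.
move=> P; apply: (witt_of_block_iso (k := 0) (l := (size C))); rewrite cats0 P.
exact/block_iso_cat/block_iso_neg_hyps/block_iso_refl.
Qed.

Lemma witt_cancel_negr X Y C : Permutation Y (X ++ neg C ++ C) -> witt X Y.
Proof.
move=> P; apply: (witt_of_block_iso (k := (size C)) (l := 0)); rewrite cats0 P.
exact/block_iso_cat/block_iso_sym/block_iso_neg_hyps/block_iso_refl.
Qed.

Section IdealPowers.
Variable k : nat.

Lemma Ipow_nil : Ipow k [::].
Proof. exact/Ipow_zero/witt_refl. Qed.

Lemma Ipow_witt X Y : Ipow k Y -> witt X Y -> Ipow k X.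
Proof. by move=> HY W; apply: (Ipow_add HY Ipow_nil); rewrite cats0. Qed.

Lemma Ipow_perm X Y : Ipow k Y -> Permutation X Y -> Ipow k X.
Proof. by move=> HY /witt_perm; apply: Ipow_witt. Qed.

Lemma Ipow_cat X Y : Ipow k X -> Ipow k Y -> Ipow k (X ++ Y).
Proof. by move=> HX HY; apply: (Ipow_add HX HY); exact: witt_refl. Qed.

Lemma Ipow_neg X : Ipow k X -> Ipow k (neg X).
Proof. by move=> HX; apply: (Ipow_opp HX); apply: (witt_cancel_negl (C := X)). Qed.

End IdealPowers.

Definition eqI3 X Y := Ipow 3 (X ++ neg Y).

Lemma I3_eqI3 X : Ipow 3 X <-> eqI3 X [::].
Proof. by rewrite /eqI3 cats0. Qed.

Lemma eqI3_refl X : eqI3 X X.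
Proof. by apply/Ipow_zero/(witt_cancel_negl (C := X)); psolve. Qed.

Lemma eqI3_sym X Y : eqI3 X Y -> eqI3 Y X.
Proof. by move=> /Ipow_neg H; apply: (Ipow_perm H); rewrite neg_cat negK; psolve. Qed.

Lemma eqI3_trans X Y Z : eqI3 X Y -> eqI3 Y Z -> eqI3 X Z.
Proof.
move=> H1 H2; apply: (Ipow_witt (Ipow_cat H1 H2)).
by apply: (witt_cancel_negr (C := Y)); psolve.
Qed.

Lemma eqI3_cat X Y X' Y' : eqI3 X Y -> eqI3 X' Y' -> eqI3 (X ++ X') (Y ++ Y').
Proof.
by move=> H1 H2; apply: (Ipow_perm (Ipow_cat H1 H2)); rewrite neg_cat; psolve.
Qed.

#[local] Instance eqI3_Equivalence : Equivalence eqI3.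
Proof. split; [exact: eqI3_refl | exact: eqI3_sym | exact: eqI3_trans]. Qed.
#[local] Instance cat_eqI3 : Proper (eqI3 ==> eqI3 ==> eqI3) cat.
Proof. by move=> X X' HX Y Y' HY; exact: eqI3_cat. Qed.
#[local] Hint Resolve eqI3_refl : core.

Lemma eqI3_perm X Y : Permutation X Y -> eqI3 X Y.
Proof. by move=> P; apply: (Ipow_perm (eqI3_refl Y)); rewrite P. Qed.

Lemma eqI3_of_block_iso X Y k l : block_iso (X ++ hyps k) (Y ++ hyps l) -> eqI3 X Y.
Proof.
move=> H; apply: (Ipow_witt (eqI3_refl Y)); apply: (witt_of_block_iso (k := k) (l := l)).
rewrite (_ : Permutation ((X ++ neg Y) ++ hyps k) ((X ++ hyps k) ++ neg Y)); last by psolve.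
rewrite (_ : Permutation ((Y ++ neg Y) ++ hyps l) ((Y ++ hyps l) ++ neg Y)); last by psolve.
exact/block_iso_cat/block_iso_refl.
Qed.

(** * The group B(S) *)

#[local] Instance Beq_Equivalence : Equivalence (@Beq S).
Proof. split; [exact: Beq_refl | exact: Beq_sym | exact: Beq_trans]. Qed.
#[local] Hint Resolve Beq_refl : core.
#[local] Instance cat_Beq : Proper (@Beq S ==> @Beq S ==> @Beq S) cat.
Proof. by move=> u u' Hu v v' Hv; exact: Beq_cat. Qed.
#[local] Instance cons_Beq c : Proper (@Beq S ==> @Beq S) (cons c).
Proof. by move=> u u' Hu; exact: (Beq_cat (Beq_refl [:: c]) Hu). Qed.

Lemma Beq_perm (u v : Bw) : Permutation u v -> u ≡ v.
Proof.
elim=> {u v} [|c u v _ IH|c d u|u v w _ IH1 _ IH2].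
- by [].
- by rewrite IH.
- exact: (Beq_cat (Beq_comm _ _) (Beq_refl u)).
- by rewrite IH1 IH2.
Qed.

Definition qb a b : Bw := [:: (true, q a b)].

Lemma qbC a b : qb a b = qb b a.
Proof. by rewrite /qb Q2. Qed.

Lemma qbMr a b c : qb a (b ⋅ c) ≡ qb a b ++ qb a c.
Proof. symmetry; exact: Beq_rel. Qed.

Lemma qbMl a b c : qb (a ⋅ b) c ≡ qb a c ++ qb b c.
Proof. by rewrite !(qbC _ c) qbMr. Qed.

Lemma Beq_zero : [:: (true, zeroQ)] ≡ [::].
Proof.
have H := Beq_rel one one one; rewrite mulg1 qx1 in H.
transitivity ([:: (true, zeroQ)] ++ [:: (true, zeroQ); (false, zeroQ)]).
  by rewrite Beq_invr cats0.
rewrite -[_ ++ _]/([:: (true, zeroQ); (true, zeroQ)] ++ [:: (false, zeroQ)]) H.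
exact: Beq_invr.
Qed.

Lemma qbx1 a : qb a one ≡ [::].
Proof. by rewrite /qb qx1 Beq_zero. Qed.

Lemma qb1x a : qb one a ≡ [::].
Proof. by rewrite qbC qbx1. Qed.

Lemma qb_neg a : qb a (m1 ⋅ a) ≡ [::].
Proof. by rewrite /qb Q1 Beq_zero. Qed.

Lemma Beq_double_gen x : [:: (true, x); (true, x)] ≡ [::].
Proof.
have [a [b <-]] := q_surj x.
by rewrite -[[:: _; _]]/(qb a b ++ qb a b) -qbMr mulgg qbx1.
Qed.

Lemma qbE a b : qb a b = [:: (true, q a b)].
Proof. by []. Qed.

Lemma qb_eq a b c d : q a b = q c d -> qb a b = qb c d.
Proof. by rewrite !qbE => ->. Qed.
Opaque qb.

Lemma Beq_inv x : [:: (false, x)] ≡ [:: (true, x)].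
Proof.
transitivity ([:: (false, x); (true, x)] ++ [:: (true, x)]); last by rewrite Beq_invl.
change ([:: (false, x)] ≡ [:: (false, x)] ++ [:: (true, x); (true, x)]).
by rewrite Beq_double_gen cats0.
Qed.

Lemma Beq_double (w : Bw) : w ++ w ≡ [::].
Proof.
have Beq_double1 c : [:: c; c] ≡ [::].
  case: c => -[] x; first exact: Beq_double_gen.
  by rewrite -[[:: _; _]]/([:: (false, x)] ++ [:: (false, x)]) Beq_inv; exact: Beq_double_gen.
elim: w => [|c w IH] //=.
rewrite (Beq_perm (_ : Permutation (c :: w ++ c :: w) ([:: c; c] ++ w ++ w))); last by psolve.
by rewrite Beq_double1 IH.
Qed.

Lemma Beq_cancel (u v : Bw) : u ++ v ≡ [::] -> u ≡ v.
Proof.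
move=> H; transitivity (u ++ (v ++ v)); first by rewrite Beq_double cats0.
by rewrite catA H.
Qed.

(* [Beq_pairs] proves [u ≡ [::]] when every block of [u] occurs twice. *)
Ltac Beq_pairs :=
  cat_norm;
  lazymatch goal with
  | |- Beq [::] [::] => reflexivity
  | |- Beq (?A ++ ?R) [::] =>
    let R' := rm_bl A R in
    transitivity (A ++ A ++ R');
      [apply: Beq_perm; psolve | rewrite catA Beq_double cat0s; Beq_pairs]
  end.
Ltac Beq_solve := apply: Beq_cancel; Beq_pairs.

(** * The Clifford invariant *)

Definition disc (X : form) : G := foldr (@mulG S) one X.

(* The Hasse invariant, sum over i < j of q(a_i, a_j), grouped by bilinearity. *)
Fixpoint hasse (X : form) : Bw :=
  if X is x :: X' then qb x (disc X') ++ hasse X' else [::].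

Lemma disc_cat X Y : disc (X ++ Y) = disc X ⋅ disc Y.
Proof. by elim: X => /= [|x X ->]; [rewrite mul1g | rewrite mulgA]. Qed.

Lemma hasse_cat X Y : hasse (X ++ Y) ≡ hasse X ++ hasse Y ++ qb (disc X) (disc Y).
Proof.
elim: X => [|x X IH] /=; first by rewrite qb1x cats0.
rewrite IH disc_cat qbMr qbMl; apply: Beq_perm; psolve.
Qed.

Lemma isom_invariants n L R : isom n L R ->
  [/\ size L = n, size R = n, disc L = disc R & hasse L ≡ hasse R].
Proof.
elim/ltn_ind: n L R => -[|[|[|m]]] IH L R /=.
- by case=> -> ->.
- by case=> [a [b [-> [-> ->]]]].
- case=> [a1 [a2 [b1 [b2 [-> [-> [E1 E2]]]]]]]; split=> //=.
    by rewrite !mulg1 E1.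
  by rewrite !mulg1 (qb_eq E2) !qbx1.
case=> [a1 [L' [b1 [R' [a [b [chi [-> [-> [_ [[E1 E2] [HL HR]]]]]]]]]]]].
have [sL _ dL hL] := IH _ (ltnSn _) _ _ HL; have [sR _ dR hR] := IH _ (ltnSn _) _ _ HR.
split; rewrite /= ?sL ?sR //; first by rewrite dL dR /= !mulgA E1.
rewrite hL hR dL dR /= !qbMr.
transitivity (qb a1 a ++ qb (a1 ⋅ a) (disc chi) ++ hasse chi).
  by rewrite qbMl; apply: Beq_perm; psolve.
by rewrite E1 (qb_eq E2) qbMl; apply: Beq_perm; psolve.
Qed.

Definition sgn n : G := if odd n then m1 else one.

Definition sdisc_trivial (X : form) : Prop := ~~ odd (size X) /\ disc X = sgn (size X)./2.

Definition wexp (b : bool) (w : Bw) : Bw := if b then w else [::].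

(* The correction [q(-1,-1)] for dimensions = 4, 6 mod 8 makes the Hasse
   invariant additive on forms with trivial signed discriminant. *)
Definition clifford_corr n : Bw := wexp (odd n./2./2) (qb m1 m1).
Definition clifford (X : form) : Bw := hasse X ++ clifford_corr (size X).

Lemma sgnD m n : sgn (m + n) = sgn m ⋅ sgn n.
Proof. by rewrite /sgn oddD; case: (odd m); case: (odd n) => /=; gnorm. Qed.

Lemma sgnS k : sgn k.+1 = m1 ⋅ sgn k.
Proof. by rewrite /sgn /=; case: (odd k) => /=; gnorm. Qed.

Lemma qb_sgn m n : qb (sgn m) (sgn n) ≡ wexp (odd m && odd n) (qb m1 m1).
Proof. by rewrite /sgn; case: (odd m); case: (odd n); rewrite ?qbx1 ?qb1x. Qed.

Lemma half_evenD a b : ~~ odd a -> (a + b)./2 = a./2 + b./2.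
Proof. by move=> Ha; rewrite halfD (negbTE Ha). Qed.

Lemma clifford_corrD a b : ~~ odd a -> ~~ odd b ->
  clifford_corr (a + b) ≡
    clifford_corr a ++ clifford_corr b ++ wexp (odd a./2 && odd b./2) (qb m1 m1).
Proof.
move=> Ha Hb; rewrite /clifford_corr half_evenD // halfD !oddD.
case: (odd a./2); case: (odd b./2); case: (odd a./2./2); case: (odd b./2./2) => /=;
  by rewrite ?cats0 ?Beq_double.
Qed.

Lemma sdisc_trivial_nil : sdisc_trivial [::].
Proof. by []. Qed.

Lemma sdisc_trivial_cat X Y :
  sdisc_trivial X -> sdisc_trivial Y -> sdisc_trivial (X ++ Y).
Proof.
move=> [HX dX] [HY dY]; split; first by rewrite size_cat oddD (negbTE HX) (negbTE HY).
by rewrite disc_cat dX dY size_cat half_evenD // sgnD.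
Qed.

Lemma sdisc_trivial_catl X Y :
  sdisc_trivial (X ++ Y) -> sdisc_trivial Y -> sdisc_trivial X.
Proof.
move=> [H d] [HY dY]; rewrite size_cat oddD (negbTE HY) addbF in H; split=> //.
move: d; rewrite disc_cat size_cat half_evenD // sgnD dY.
move=> /(f_equal (@mulG S^~ (sgn (size Y)./2))).
by rewrite -!mulgA !mulgg !mulg1.
Qed.

Lemma clifford_cat X Y : sdisc_trivial X -> sdisc_trivial Y ->
  clifford (X ++ Y) ≡ clifford X ++ clifford Y.
Proof.
move=> [HX dX] [HY dY]; rewrite /clifford hasse_cat size_cat clifford_corrD // dX dY qb_sgn.
set e := wexp _ _; transitivity (clifford X ++ clifford Y ++ (e ++ e)).
  by apply: Beq_perm; rewrite /clifford; psolve.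
by rewrite Beq_double cats0.
Qed.

Lemma sdisc_trivial_hyps k : sdisc_trivial (hyps k).
Proof.
elim: k => [|k IH]; first by [].
apply: (sdisc_trivial_cat _ IH); by split=> //=; rewrite mulg1 mul1g.
Qed.

Lemma clifford_hyps k : clifford (hyps k) ≡ [::].
Proof.
elim: k => [|k IH] //.
rewrite -[hyps k.+1]/(hyp S ++ hyps k) clifford_cat ?IH ?cats0 //; last exact: sdisc_trivial_hyps.
  by rewrite /clifford /= qb1x qbx1.
by split=> //=; rewrite mulg1 mul1g.
Qed.

Lemma witt_sdisc_trivial X Y : witt X Y -> sdisc_trivial Y -> sdisc_trivial X.
Proof.
move=> [k [l /isom_invariants [_ sY dXY _]]] HY.
have [HYl dYl] := sdisc_trivial_cat HY (sdisc_trivial_hyps l).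
apply: (sdisc_trivial_catl (Y := hyps k)); last exact: sdisc_trivial_hyps.
by split; rewrite -sY // dXY.
Qed.

Lemma witt_clifford X Y : witt X Y -> sdisc_trivial X -> sdisc_trivial Y ->
  clifford X ≡ clifford Y.
Proof.
move=> [k [l /isom_invariants [_ sY _ hXY]]] HX HY.
have: clifford (X ++ hyps k) ≡ clifford (Y ++ hyps l) by rewrite /clifford sY hXY.
by rewrite !clifford_cat ?clifford_hyps ?cats0 //; exact: sdisc_trivial_hyps.
Qed.

(** * Scaled forms and products of forms *)

Definition gexp (b : bool) (y : G) : G := if b then y else one.

Lemma size_scale y X : size (scale y X) = size X.
Proof. exact: size_map. Qed.

Lemma disc_scale y X : disc (scale y X) = gexp (odd (size X)) y ⋅ disc X.
Proof.
elim: X => [|x X IH] /=; first by rewrite mulg1.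
rewrite -/(scale y X) IH /gexp; case: (odd (size X)) => /=; gnorm.
Qed.

Lemma odd_half_succ n : odd n.+1./2 = odd n (+) odd n./2.
Proof. by rewrite -uphalfE uphalf_half oddD oddb. Qed.

Lemma hasse_scale y X : hasse (scale y X) ≡
  hasse X ++ wexp (odd (size X)./2) (qb y y) ++ wexp (~~ odd (size X)) (qb y (disc X)).
Proof.
elim: X => [|x X IH] /=; first by rewrite qbx1.
rewrite -/(scale y X) IH disc_scale odd_half_succ /gexp.
case: (odd (size X)); case: (odd (size X)./2) => /=;
  rewrite ?cats0 ?cat0s ?mul1g ?qbMl ?qbMr ?qbx1 ?qb1x ?cats0 ?cat0s ?(qbC x y);
  Beq_solve.
Qed.

Lemma sdisc_trivial_scale y X : sdisc_trivial X -> sdisc_trivial (scale y X).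
Proof.
move=> [H d]; rewrite /sdisc_trivial size_scale; split=> //.
by rewrite disc_scale d /gexp (negbTE H) mul1g.
Qed.

Lemma clifford_scale y X : sdisc_trivial X -> clifford (scale y X) ≡ clifford X.
Proof.
move=> [H d]; rewrite /clifford size_scale hasse_scale H d /=.
suff -> : wexp (odd (size X)./2) (qb y y) ++ qb y (sgn (size X)./2) ≡ [::] by rewrite cats0.
rewrite /sgn; case: (odd (size X)./2) => /=; last by rewrite qbx1.
by rewrite -qbMr mulgC qb_neg.
Qed.

(* Satisfied by every product of two even-dimensional forms. *)
Definition disc1_dim4 (X : form) : Prop := 4 %| size X /\ disc X = one.

Lemma disc1_dim4_sdisc X : disc1_dim4 X -> sdisc_trivial X.
Proof.
move=> [/dvdnP [k Hk] d]; rewrite /sdisc_trivial d Hk oddM andbF; split=> //.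
by rewrite (_ : k * 4 = (k * 2).*2) ?doubleK /sgn ?oddM ?andbF // -mul2n mulnCA mulnA.
Qed.

Lemma disc1_dim4_cat X Y : disc1_dim4 X -> disc1_dim4 Y -> disc1_dim4 (X ++ Y).
Proof. by move=> [H1 d1] [H2 d2]; split; rewrite ?size_cat ?dvdn_add // disc_cat d1 d2 mulg1. Qed.

Lemma disc1_dim4_scale y X : disc1_dim4 X -> disc1_dim4 (scale y X).
Proof.
move=> [/dvdnP [k Hk] d]; rewrite /disc1_dim4 size_scale disc_scale d Hk oddM andbF.
by rewrite mulg1 dvdn_mull.
Qed.

Lemma tensor_cons X b C : tensor X (b :: C) = scale b X ++ tensor X C.
Proof. by []. Qed.

Lemma disc1_dim4_tensor X C : disc1_dim4 X -> disc1_dim4 (tensor X C).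
Proof.
move=> HX; elim: C => [|b C IH]; first by [].
by rewrite tensor_cons; apply: disc1_dim4_cat => //; exact: disc1_dim4_scale.
Qed.

Lemma clifford_tensor X C :
  disc1_dim4 X -> clifford (tensor X C) ≡ wexp (odd (size C)) (clifford X).
Proof.
move=> HX; have SX := disc1_dim4_sdisc HX; elim: C => [|b C IH] //=.
rewrite tensor_cons clifford_cat; first last.
- exact/disc1_dim4_sdisc/disc1_dim4_tensor.
- exact: sdisc_trivial_scale.
rewrite clifford_scale // IH; case: (odd (size C)) => /=; by rewrite ?Beq_double ?cats0.
Qed.

Lemma size_tensor X C : size (tensor X C) = size X * size C.
Proof. by elim: C => [|b C IH]; rewrite ?muln0 // tensor_cons size_cat size_scale IH mulnS. Qed.

Lemma disc_tensor X C :
  ~~ odd (size X) -> disc (tensor X C) = gexp (odd (size C)) (disc X).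
Proof.
move=> HX; elim: C => [|b C IH] //=.
rewrite tensor_cons disc_cat disc_scale (negbTE HX) IH /gexp mul1g.
by case: (odd (size C)) => /=; rewrite ?mulgg ?mulg1.
Qed.

Lemma disc1_dim4_tensor_even X Y :
  ~~ odd (size X) -> ~~ odd (size Y) -> disc1_dim4 (tensor X Y).
Proof.
move=> HX HY; split; last by rewrite disc_tensor // (negbTE HY).
move: HX HY; rewrite size_tensor -!dvdn2 => /dvdnP [a ->] /dvdnP [b ->].
by rewrite mulnCA !mulnA -mulnA dvdn_mull.
Qed.

Lemma tensor1l C : tensor [:: one] C = C.
Proof. by elim: C => [|b C IH] //; rewrite tensor_cons IH /scale /= mulg1. Qed.

Lemma prodf2 X Y : prodf [:: X; Y] = tensor X Y.
Proof. by rewrite /prodf /= tensor1l. Qed.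

Lemma prodf3 X Y Z : prodf [:: X; Y; Z] = tensor (tensor X Y) Z.
Proof. by rewrite /prodf /= tensor1l. Qed.

Lemma Ipow2_sdisc X : Ipow 2 X -> sdisc_trivial X.
Proof.
elim=> {X} [chis X + + W|X W|X Y Z _ HX _ HY W|X Y _ HX W].
- move: W; case: chis => [|X1 [|X2 []]] //; rewrite prodf2 => W _ /and3P [H1 H2 _].
  exact/(witt_sdisc_trivial W)/disc1_dim4_sdisc/disc1_dim4_tensor_even.
- exact: witt_sdisc_trivial W _.
- exact: witt_sdisc_trivial W (sdisc_trivial_cat HX HY).
- exact: sdisc_trivial_catl (witt_sdisc_trivial W _) HX.
Qed.

Lemma Ipow3_clifford X : Ipow 3 X -> sdisc_trivial X /\ clifford X ≡ [::].
Proof.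
elim=> {X} [chis X + + W|X W|X Y Z _ [HX cX] _ [HY cY] W|X Y _ [HX cX] W].
- move: W; case: chis => [|X1 [|X2 [|X3 []]]] //.
  rewrite prodf3 => W _ /and4P [H1 H2 H3 _].
  have H123 := disc1_dim4_tensor X3 (disc1_dim4_tensor_even H1 H2).
  have SX := witt_sdisc_trivial W (disc1_dim4_sdisc H123); split=> //.
  rewrite (witt_clifford W SX (disc1_dim4_sdisc H123)) clifford_tensor ?(negbTE H3) //.
  exact: disc1_dim4_tensor_even.
- have SX := witt_sdisc_trivial W sdisc_trivial_nil; split=> //.
  exact: witt_clifford W SX sdisc_trivial_nil.
- have SZ := witt_sdisc_trivial W (sdisc_trivial_cat HX HY); split=> //.
  by rewrite (witt_clifford W SZ (sdisc_trivial_cat HX HY)) clifford_cat // cX cY.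
- have SYX := witt_sdisc_trivial W sdisc_trivial_nil.
  have SY := sdisc_trivial_catl SYX HX; split=> //.
  by have := witt_clifford W SYX sdisc_trivial_nil; rewrite clifford_cat // cX cats0.
Qed.

(** * Pfister forms *)

Lemma pfisterE a b : pfister a b = [:: one; m1 ⋅ a; m1 ⋅ b; a ⋅ b].
Proof. rewrite /pfister /tensor /scale /=; gnorm_seq. Qed.

Lemma disc1_dim4_pfister a b : disc1_dim4 (pfister a b).
Proof. exact: disc1_dim4_tensor_even. Qed.

Lemma Ipow2_pfister a b : Ipow 2 (pfister a b).
Proof.
apply: (@Ipow_prod _ _ [:: [:: one; m1 ⋅ a]; [:: one; m1 ⋅ b]]) => //.
rewrite prodf2; exact: witt_refl.
Qed.

Lemma clifford_pfister a b : clifford (pfister a b) ≡ qb a b.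
Proof.
have qb_aa x : qb x x ≡ qb x m1 by apply: Beq_cancel; rewrite -qbMr mulgC qb_neg.
rewrite pfisterE /clifford /clifford_corr /= !mulg1 !qbMl !qbMr ?qb1x ?qbx1 ?cat0s ?cats0.
rewrite (qb_aa a) (qb_aa b) (qbC m1 a) (qbC m1 b) (qbC b a); Beq_solve.
Qed.

Lemma I3_pfister_double a b : Ipow 3 (pfister a b ++ pfister a b).
Proof.
apply: (@Ipow_prod _ _ [:: [:: one; m1 ⋅ a]; [:: one; m1 ⋅ b]; [:: one; one]]) => //.
rewrite prodf3 -/(pfister a b) !tensor_cons [tensor _ [::]]/= cats0.
have -> : scale one (pfister a b) = pfister a b.
  by rewrite -[RHS]map_id; apply: eq_map => x; rewrite mul1g.
exact: witt_refl.
Qed.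

Lemma I3_pfister_of_q0 a y : q a y = zeroQ -> Ipow 3 (pfister a y).
Proof.
move=> H; set ay := a ⋅ y.
have Hy : q y (m1 ⋅ ay) = zeroQ.
  by rewrite (_ : m1 ⋅ ay = a ⋅ (m1 ⋅ y)); [apply/Q3; rewrite Q2 H Q1 | rewrite /ay; gnorm].
apply: (Ipow_witt (Y := [:: y; m1 ⋅ ay; m1 ⋅ y; ay])).
  apply/Ipow_zero/(witt_of_block_iso (k := 0) (l := 2)) => /=.
  rewrite (_ : Permutation [:: y; m1 ⋅ ay; m1 ⋅ y; ay] [:: y; m1 ⋅ y; m1 ⋅ ay; ay]);
    last by psolve.
  exact/block_iso_pair/block_iso_pair/block_iso_nil/iso2_swl/iso2_hyp/iso2_hyp.
rewrite pfisterE; apply: (witt_of_block_iso (k := 0) (l := 0)) => /=.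
apply/block_iso_pair/block_iso_refl; split; [rewrite /ay; gnorm | by rewrite q1x Hy].
Qed.

Lemma eqI3_pfister_mulr a b c : eqI3 (pfister a b ++ pfister a c) (pfister a (b ⋅ c)).
Proof.
pose P3 := [:: one; m1 ⋅ a; m1 ⋅ b; a ⋅ b; m1 ⋅ c; a ⋅ c; b ⋅ c;
              m1 ⋅ (a ⋅ (b ⋅ c))].
have HP3 : Ipow 3 P3.
  set abc := [:: [:: one; m1 ⋅ a]; [:: one; m1 ⋅ b]; [:: one; m1 ⋅ c]].
  apply: (@Ipow_prod _ _ abc) => //.
  have -> : prodf abc = P3 by rewrite prodf3 /tensor /scale /P3 /=; gnorm_seq.
  exact: witt_refl.
apply: (Ipow_witt HP3); apply: (witt_of_block_iso (k := 0) (l := 2)).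
have -> : neg (pfister a (b ⋅ c)) = [:: m1; a; b ⋅ c; m1 ⋅ (a ⋅ (b ⋅ c))].
  by rewrite pfisterE /neg /scale /=; gnorm_seq.
rewrite !pfisterE.
apply: (block_iso_perm (L := P3 ++ [:: a; m1 ⋅ a; m1; one]) _ (Permutation_refl _)).
  by rewrite /P3 /hyps /=; psolve.
apply: block_iso_cat; first exact: block_iso_refl.
rewrite /hyps /=.
apply: block_iso_pair; first exact: iso2_hyp.
apply: block_iso_pair; [exact: iso2_swap | exact: block_iso_nil].
Qed.

Lemma eqI3_pfisterC a b : eqI3 (pfister a b) (pfister b a).
Proof. by apply: eqI3_perm; rewrite !pfisterE (mulgC a b); psolve. Qed.

Lemma eqI3_pfister_qr a b c : q a b = q a c -> eqI3 (pfister a b) (pfister a c).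
Proof.
move=> /Q3 /I3_pfister_of_q0 /I3_eqI3 Hbc.
have /I3_eqI3 Hcc := I3_pfister_double a c.
transitivity (pfister a b ++ pfister a c ++ pfister a c); first by rewrite Hcc cats0.
by rewrite catA eqI3_pfister_mulr Hbc.
Qed.

Lemma eqI3_pfister_q a b c d : q a b = q c d -> eqI3 (pfister a b) (pfister c d).
Proof.
move/Q4 => [x [E1 [E2 E3]]].
rewrite (eqI3_pfister_qr E1) eqI3_pfisterC (eqI3_pfister_qr (a := x) (b := a) (c := c));
  last by rewrite Q2 E2 Q2.
by rewrite eqI3_pfisterC (eqI3_pfister_qr E3).
Qed.

(** * Sums of Pfister forms *)

Lemma q_surj_pair x : exists p : G * G, q p.1 p.2 = x.
Proof. by have [a [b E]] := q_surj x; exists (a, b). Qed.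

Definition qrep (x : Q) : G * G :=
  proj1_sig (constructive_indefinite_description _ (q_surj_pair x)).

Lemma qrepP x : q (qrep x).1 (qrep x).2 = x.
Proof. exact: proj2_sig (constructive_indefinite_description _ (q_surj_pair x)). Qed.

(* A generator and its inverse give the same form: [B(S)] has exponent 2. *)
Definition pfister_of (c : bool * Q) : form := pfister (qrep c.2).1 (qrep c.2).2.
Definition pfister_sum (w : Bw) : form := flatten (map pfister_of w).

Lemma pfister_sum_nil : pfister_sum [::] = [::].
Proof. by []. Qed.

Lemma pfister_sum_cons c w : pfister_sum (c :: w) = pfister_of c ++ pfister_sum w.
Proof. by []. Qed.

Lemma pfister_sum_cat u v : pfister_sum (u ++ v) = pfister_sum u ++ pfister_sum v.
Proof. by rewrite /pfister_sum map_cat flatten_cat. Qed.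

Lemma eqI3_pfister_of a b : eqI3 (pfister_of (true, q a b)) (pfister a b).
Proof. exact/eqI3_pfister_q/qrepP. Qed.

Lemma Ipow2_pfister_sum w : Ipow 2 (pfister_sum w).
Proof. by elim: w => [|c w IH]; [exact: Ipow_nil | exact: Ipow_cat (Ipow2_pfister _ _) IH]. Qed.

Lemma clifford_pfister_sum w : sdisc_trivial (pfister_sum w) /\ clifford (pfister_sum w) ≡ w.
Proof.
elim: w => [|c w [Sw Cw]] //.
have Sc := disc1_dim4_sdisc (disc1_dim4_pfister (qrep c.2).1 (qrep c.2).2).
split; first exact: sdisc_trivial_cat.
rewrite [pfister_sum _]/= clifford_cat // Cw clifford_pfister qbE qrepP.
by case: c {Sc} => -[] x //; rewrite -[_ :: w]/([:: _] ++ w) Beq_inv.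
Qed.

Lemma eqI3_pfister_sum u v : u ≡ v -> eqI3 (pfister_sum u) (pfister_sum v).
Proof.
elim=> {u v} [u|u v _ IH|u v w _ IH1 _ IH2|u u' v v' _ IH1 _ IH2|x|x|c d|a b c] //.
- by symmetry.
- by rewrite IH1.
- by rewrite !pfister_sum_cat IH1 IH2.
all: rewrite !pfister_sum_cons pfister_sum_nil ?cats0.
- by apply/I3_eqI3; rewrite cats0; exact: I3_pfister_double.
- by apply/I3_eqI3; rewrite cats0; exact: I3_pfister_double.
- by apply: eqI3_perm; exact: Permutation_catC.
- by rewrite !eqI3_pfister_of eqI3_pfister_mulr.
Qed.

Lemma eqI3_clifford X Y : sdisc_trivial X -> sdisc_trivial Y -> eqI3 X Y ->
  clifford X ≡ clifford Y.
Proof.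
move=> SX SY /Ipow3_clifford [_]; rewrite clifford_cat ?clifford_scale //.
  exact: Beq_cancel.
exact: sdisc_trivial_scale.
Qed.

(* Trading two binary pieces <x,y>, <z,t> of a form for Pfister forms lowers
   the dimension by two. *)
Lemma eqI3_pfister_reduce x y z t Z :
  eqI3 ([:: x, y, z, t & Z] ++ pfister x y ++ pfister z t)
       ([:: one, m1 ⋅ (x ⋅ y ⋅ (z ⋅ t)) & Z] ++
          pfister (m1 ⋅ (x ⋅ y)) (m1 ⋅ (z ⋅ t))).
Proof.
set W := x ⋅ y ⋅ (z ⋅ t).
have -> : pfister (m1 ⋅ (x ⋅ y)) (m1 ⋅ (z ⋅ t)) = [:: one; x ⋅ y; z ⋅ t; W].
  by rewrite pfisterE /W; gnorm_seq.
rewrite !pfisterE; apply: (eqI3_of_block_iso (k := 1) (l := 4)).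
set C := Z ++ [:: one; one; x ⋅ y; z ⋅ t].
apply: (block_iso_perm (L := C ++ [:: x; m1 ⋅ x; y; m1 ⋅ y; z; m1 ⋅ z; t; m1 ⋅ t; one; m1])
                       (R := C ++ [:: one; m1; one; m1; one; m1; one; m1; m1 ⋅ W; W])).
- by rewrite /C /hyps /=; psolve.
- by rewrite /C /hyps /=; psolve.
apply: block_iso_cat; first exact: block_iso_refl.
do 4 (apply: block_iso_pair; first exact: iso2_hyp).
apply: block_iso_pair; [exact/iso2_sym/iso2_swl/iso2_hyp | exact: block_iso_nil].
Qed.

Lemma eqI3_pfister_sum_of_sdisc Z : sdisc_trivial Z -> exists w, eqI3 Z (pfister_sum w).
Proof.
have [n] := ubnP (size Z); elim: n Z => // n IH [|x [|y [|z [|t Z]]]] lt_Zn [evZ dZ] //.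
- by exists [::].
- exists [::]; apply/I3_eqI3/Ipow_zero/(witt_of_block_iso (k := 0) (l := 1)) => /=.
  have -> : y = m1 ⋅ x by rewrite (_ : m1 = sgn 1) // -dZ /=; gnorm.
  apply: block_iso_pair; [exact: iso2_hyp | exact: block_iso_nil].
set N := [:: one, m1 ⋅ (x ⋅ y ⋅ (z ⋅ t)) & Z].
have SN : sdisc_trivial N.
  move: evZ dZ; rewrite /sdisc_trivial /N /= !sgnS !negbK => evZ dZ; split=> //.
  have -> : sgn (size Z)./2 = x ⋅ (y ⋅ (z ⋅ (t ⋅ disc Z))) by rewrite dZ; gnorm.
  gnorm.
have [w Hw] := IH N (ltnW lt_Zn) SN.
exists (w ++ [:: (true, q (m1 ⋅ (x ⋅ y)) (m1 ⋅ (z ⋅ t))); (true, q x y); (true, q z t)]).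
set P := pfister x y ++ pfister z t.
have PP : eqI3 (P ++ P) [::].
  rewrite (eqI3_perm (_ : Permutation (P ++ P)
    ((pfister x y ++ pfister x y) ++ pfister z t ++ pfister z t))); last by rewrite /P; psolve.
  exact/I3_eqI3/(Ipow_cat (I3_pfister_double x y) (I3_pfister_double z t)).
set Z4 := [:: x, y, z, t & Z].
transitivity (Z4 ++ P ++ P); first by rewrite PP cats0.
rewrite catA (eqI3_pfister_reduce x y z t Z) -/N Hw pfister_sum_cat.
by rewrite !pfister_sum_cons pfister_sum_nil cats0 !eqI3_pfister_of -!catA.
Qed.

Lemma clifford_cosetI3_eq X Y : sdisc_trivial X -> sdisc_trivial Y ->
  cosetI3_eq X Y -> clifford X ≡ clifford Y.
Proof.
move=> SX SY [Z [/Ipow3_clifford [SZ CZ] W]].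
by rewrite (witt_clifford W SX (sdisc_trivial_cat SY SZ)) clifford_cat // CZ cats0.
Qed.

Lemma cosetI3_eq_clifford X Y : sdisc_trivial X -> sdisc_trivial Y ->
  clifford X ≡ clifford Y -> cosetI3_eq X Y.
Proof.
move=> SX SY E.
have [u Hu] := eqI3_pfister_sum_of_sdisc SX; have [v Hv] := eqI3_pfister_sum_of_sdisc SY.
have [Su Cu] := clifford_pfister_sum u; have [Sv Cv] := clifford_pfister_sum v.
have Euv : u ≡ v.
  by rewrite -Cu -Cv -(eqI3_clifford SX Su Hu) -(eqI3_clifford SY Sv Hv).
exists (X ++ neg Y); split; last by apply: (witt_cancel_negr (C := Y)); psolve.
by change (eqI3 X Y); rewrite Hu Hv (eqI3_pfister_sum Euv).
Qed.

End Quaternionic.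

Theorem corollary4 (S : qstruct) :
  exists f : form S -> Bword S,
    (forall phi psi, Ipow 2 phi -> Ipow 2 psi ->
       (cosetI3_eq phi psi <-> Beq (f phi) (f psi))) /\
    (forall phi psi, Ipow 2 phi -> Ipow 2 psi ->
       Beq (f (phi ++ psi)) (f phi ++ f psi)) /\
    (forall w : Bword S, exists phi, Ipow 2 phi /\ Beq (f phi) w) /\
    (forall a b, Beq (f (pfister a b)) [:: (true, @q S a b)]).
Proof.
exists (@clifford S); split; last split; last split.
- move=> phi psi /Ipow2_sdisc Sphi /Ipow2_sdisc Spsi.
  by split; [exact: clifford_cosetI3_eq | exact: cosetI3_eq_clifford].
- by move=> phi psi /Ipow2_sdisc Sphi /Ipow2_sdisc Spsi; exact: clifford_cat.
- move=> w; exists (pfister_sum w); split; first exact: Ipow2_pfister_sum.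
  by case: (clifford_pfister_sum w).
- by move=> a b; rewrite -qbE; exact: clifford_pfister.
Qed.
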